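(* Let $A$ be a commutative semiring (not necessarily idempotent), $M$ a flat $A$-module, and $v:A^n\to M$ a homomorphism from a finite free module. Suppose $f,g:A\to A^n$ are homomorphisms with $v\circ f=v\circ g$. Then there exist a finite free module $A^m$ and homomorphisms $u:A^n\to A^m$, $w:A^m\to M$ with $v=w\circ u$ and $u\circ f=u\circ g$.
   Context: Modules over a semiring $A$ are commutative monoids with a compatible $A$-action; the category is semiadditive and has a tensor product $\otimes_A$. An $A$-module $M$ is flat if the functor $-\otimes_A M$ is exact (preserves finite limits as well as finite colimits). *)

From HB Require Import structures.
From mathcomp Require Import all_boot all_order all_algebra.
Set Implicit Arguments. Unset Strict Implicit. Unset Printing Implicit Defensive.
Import GRing.Theory.
Local Open Scope ring_scope.

Section ModCat.
Variable A : comPzSemiRingType.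

Definition modhom (U V : lSemiModType A) (f : U -> V) : Prop :=
  [/\ f 0 = 0, (forall x y, f (x + y) = f x + f y)
    & (forall (a : A) x, f (a *: x) = a *: f x)].

Definition bilinear (U V W : lSemiModType A) (b : U -> V -> W) : Prop :=
  (forall y, modhom (fun x => b x y)) /\ (forall x, modhom (b x)).

Definition is_tensor (U V T : lSemiModType A) (t : U -> V -> T) : Prop :=
  bilinear t /\
  forall (P : lSemiModType A) (b : U -> V -> P), bilinear b ->
    (exists h : T -> P, modhom h /\ forall x y, h (t x y) = b x y) /\
    (forall h h' : T -> P, modhom h -> modhom h' ->
       (forall x y, h (t x y) = b x y) -> (forall x y, h' (t x y) = b x y) ->
       forall z, h z = h' z).

Definition tensor_map (U U' M T T' : lSemiModType A) (t : U -> M -> T)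
  (t' : U' -> M -> T') (f : U -> U') (h : T -> T') : Prop :=
  modhom h /\ forall x y, h (t x y) = t' (f x) y.

Definition is_terminal (Z : lSemiModType A) : Prop :=
  forall X : lSemiModType A,
    (exists h : X -> Z, modhom h) /\
    (forall h h' : X -> Z, modhom h -> modhom h' -> forall x, h x = h' x).

Definition is_initial (Z : lSemiModType A) : Prop :=
  forall X : lSemiModType A,
    (exists h : Z -> X, modhom h) /\
    (forall h h' : Z -> X, modhom h -> modhom h' -> forall x, h x = h' x).

Definition is_product (N1 N2 P : lSemiModType A) (p1 : P -> N1) (p2 : P -> N2) : Prop :=
  [/\ modhom p1, modhom p2 &
  forall (X : lSemiModType A) (k1 : X -> N1) (k2 : X -> N2), modhom k1 -> modhom k2 ->
    (exists h : X -> P, [/\ modhom h, forall x, p1 (h x) = k1 x & forall x, p2 (h x) = k2 x]) /\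
    (forall h h' : X -> P, modhom h -> modhom h' ->
       (forall x, p1 (h x) = k1 x) -> (forall x, p2 (h x) = k2 x) ->
       (forall x, p1 (h' x) = k1 x) -> (forall x, p2 (h' x) = k2 x) ->
       forall x, h x = h' x)].

Definition is_coproduct (N1 N2 C : lSemiModType A) (i1 : N1 -> C) (i2 : N2 -> C) : Prop :=
  [/\ modhom i1, modhom i2 &
  forall (X : lSemiModType A) (k1 : N1 -> X) (k2 : N2 -> X), modhom k1 -> modhom k2 ->
    (exists h : C -> X, [/\ modhom h, forall x, h (i1 x) = k1 x & forall x, h (i2 x) = k2 x]) /\
    (forall h h' : C -> X, modhom h -> modhom h' ->
       (forall x, h (i1 x) = k1 x) -> (forall x, h (i2 x) = k2 x) ->
       (forall x, h' (i1 x) = k1 x) -> (forall x, h' (i2 x) = k2 x) ->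
       forall x, h x = h' x)].

Definition is_equalizer (N N' E : lSemiModType A) (f g : N -> N') (e : E -> N) : Prop :=
  [/\ modhom e, (forall x, f (e x) = g (e x)) &
  forall (X : lSemiModType A) (k : X -> N), modhom k -> (forall x, f (k x) = g (k x)) ->
    (exists h : X -> E, modhom h /\ forall x, e (h x) = k x) /\
    (forall h h' : X -> E, modhom h -> modhom h' ->
       (forall x, e (h x) = k x) -> (forall x, e (h' x) = k x) ->
       forall x, h x = h' x)].

Definition is_coequalizer (N N' Q : lSemiModType A) (f g : N -> N') (q : N' -> Q) : Prop :=
  [/\ modhom q, (forall x, q (f x) = q (g x)) &
  forall (X : lSemiModType A) (k : N' -> X), modhom k -> (forall x, k (f x) = k (g x)) ->
    (exists h : Q -> X, modhom h /\ forall x, h (q x) = k x) /\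
    (forall h h' : Q -> X, modhom h -> modhom h' ->
       (forall x, h (q x) = k x) -> (forall x, h' (q x) = k x) ->
       forall x, h x = h' x)].

(* M is flat: the functor - (x)_A M preserves finite limits (terminal object,
   binary products, equalizers) and finite colimits (initial object, binary
   coproducts, coequalizers).  Since tensor products are unique up to unique
   isomorphism, we quantify over all choices of tensor products. *)
Definition flat (M : lSemiModType A) : Prop :=
  (forall (Z TZ : lSemiModType A) (tZ : Z -> M -> TZ),
     is_terminal Z -> is_tensor tZ -> is_terminal TZ) /\
  (forall (Z TZ : lSemiModType A) (tZ : Z -> M -> TZ),
     is_initial Z -> is_tensor tZ -> is_initial TZ) /\
  (forall (N1 N2 P T1 T2 TP : lSemiModType A) (p1 : P -> N1) (p2 : P -> N2)
          (t1 : N1 -> M -> T1) (t2 : N2 -> M -> T2) (tP : P -> M -> TP)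
          (p1' : TP -> T1) (p2' : TP -> T2),
     is_product p1 p2 -> is_tensor t1 -> is_tensor t2 -> is_tensor tP ->
     tensor_map tP t1 p1 p1' -> tensor_map tP t2 p2 p2' ->
     is_product p1' p2') /\
  (forall (N1 N2 C T1 T2 TC : lSemiModType A) (i1 : N1 -> C) (i2 : N2 -> C)
          (t1 : N1 -> M -> T1) (t2 : N2 -> M -> T2) (tC : C -> M -> TC)
          (i1' : T1 -> TC) (i2' : T2 -> TC),
     is_coproduct i1 i2 -> is_tensor t1 -> is_tensor t2 -> is_tensor tC ->
     tensor_map t1 tC i1 i1' -> tensor_map t2 tC i2 i2' ->
     is_coproduct i1' i2') /\
  (forall (N N' E TN TN' TE : lSemiModType A) (f g : N -> N') (e : E -> N)
          (tN : N -> M -> TN) (tN' : N' -> M -> TN') (tE : E -> M -> TE)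
          (f' g' : TN -> TN') (e' : TE -> TN),
     modhom f -> modhom g -> is_equalizer f g e ->
     is_tensor tN -> is_tensor tN' -> is_tensor tE ->
     tensor_map tN tN' f f' -> tensor_map tN tN' g g' -> tensor_map tE tN e e' ->
     is_equalizer f' g' e') /\
  (forall (N N' Q TN TN' TQ : lSemiModType A) (f g : N -> N') (q : N' -> Q)
          (tN : N -> M -> TN) (tN' : N' -> M -> TN') (tQ : Q -> M -> TQ)
          (f' g' : TN -> TN') (q' : TN' -> TQ),
     modhom f -> modhom g -> is_coequalizer f g q ->
     is_tensor tN -> is_tensor tN' -> is_tensor tQ ->
     tensor_map tN tN' f f' -> tensor_map tN tN' g g' -> tensor_map tN' tQ q q' ->
     is_coequalizer f' g' q').

End ModCat.

From Pilot Require Import Defs.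
From HB Require Import structures.
From mathcomp Require Import all_boot all_order all_algebra.
From mathcomp Require boolp.
Set Implicit Arguments. Unset Strict Implicit. Unset Printing Implicit Defensive.
Import GRing.Theory.
Local Open Scope ring_scope.

(* Identify v with the element z = sum_i e_i (x) v(e_i) of
   A^n (x) M, where A^n is read as the dual of A^n via the dot product.  The two
   maps A^n -> A pairing with p = f 1 and q = g 1 send z to 1 (x) v(p) and
   1 (x) v(q), which agree.  Flatness says that (- (x) M) preserves the
   equalizer E = {y | y.p = y.q}, so z = sum_j y_j (x) m_j with every y_j in E.
   Then u x = (y_j . x)_j and w c = sum_j c_j m_j do the job: applying the
   bilinear map (y, m) |-> (y . x) m to both expressions of z gives v = w o u,
   and u p = u q because each y_j lies in E. *)

Section ModuleHomomorphisms.
Variable A : comPzSemiRingType.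

Lemma modhom_sum (U V : lSemiModType A) (h : U -> V) (I : Type) (r : seq I) (F : I -> U) :
  modhom h -> h (\sum_(i <- r) F i) = \sum_(i <- r) h (F i).
Proof.
case=> h0 hD _; elim: r => [|i r IHr]; first by rewrite !big_nil.
by rewrite !big_cons hD IHr.
Qed.

Lemma modhom_regular (V : lSemiModType A) (h : A^o -> V) (a : A^o) :
  modhom h -> h a = a *: h 1.
Proof. by case=> _ _ hZ; rewrite -hZ; congr h; rewrite /GRing.scale /= mulr1. Qed.

End ModuleHomomorphisms.

Section TensorProduct.
Variables (A : comPzSemiRingType) (U V : lSemiModType A).

Definition bilin_sum (P : lSemiModType A) (b : U -> V -> P) (s : seq (U * V)) : P :=
  \sum_(x <- s) b x.1 x.2.

Definition bilin_equiv (s t : seq (U * V)) : Prop :=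
  forall (P : lSemiModType A) (b : U -> V -> P), Defs.bilinear b -> bilin_sum b s = bilin_sum b t.

(* U (x) V is the set of formal sums of pairs modulo [bilin_equiv]; a class is
   represented by a classically chosen canonical member. *)
Definition tensor_repr (s : seq (U * V)) : seq (U * V) :=
  choose (fun t => boolp.asbool (bilin_equiv s t)) s.

Lemma bilin_equiv_repr s : bilin_equiv s (tensor_repr s).
Proof.
apply/boolp.asboolP; apply: (chooseP (P := fun t => boolp.asbool (bilin_equiv s t))).
exact/boolp.asboolP.
Qed.

Lemma tensor_repr_eq s t : bilin_equiv s t -> tensor_repr s = tensor_repr t.
Proof.
move=> est; rewrite /tensor_repr.
have same_class : (fun u => boolp.asbool (bilin_equiv s u)) =1 (fun u => boolp.asbool (bilin_equiv t u)).
  move=> u; apply/boolp.asboolP/boolp.asboolP => esu P b hb.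
    by rewrite -(est P b hb) (esu P b hb).
  by rewrite (est P b hb) (esu P b hb).
rewrite (eq_choose same_class).
by apply: choose_id; apply/boolp.asboolP => // P b hb; rewrite (est P b hb).
Qed.

Lemma tensor_repr_idem s : tensor_repr (tensor_repr s) == tensor_repr s.
Proof. by apply/eqP/esym/tensor_repr_eq/bilin_equiv_repr. Qed.

Definition tensor : Type := {s : seq (U * V) | tensor_repr s == s}.
HB.instance Definition _ := Choice.on tensor.

Definition tensor_class (s : seq (U * V)) : tensor := exist _ (tensor_repr s) (tensor_repr_idem s).

Lemma tensor_classK (z : tensor) : tensor_class (val z) = z.
Proof. by apply: val_inj; apply/eqP; case: z. Qed.

Lemma tensor_class_eq s t : bilin_equiv s t -> tensor_class s = tensor_class t.
Proof. by move=> est; apply: val_inj; apply: tensor_repr_eq. Qed.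

Lemma bilin_sum_class (P : lSemiModType A) (b : U -> V -> P) s :
  Defs.bilinear b -> bilin_sum b (val (tensor_class s)) = bilin_sum b s.
Proof. by move=> hb; rewrite -(bilin_equiv_repr s hb). Qed.

Lemma tensor_class_inj s t : tensor_class s = tensor_class t -> bilin_equiv s t.
Proof.
move=> /(congr1 val) /= est P b hb.
by rewrite (bilin_equiv_repr s hb) est -(bilin_equiv_repr t hb).
Qed.

Lemma bilin_sum_cat (P : lSemiModType A) (b : U -> V -> P) s t :
  bilin_sum b (s ++ t) = bilin_sum b s + bilin_sum b t.
Proof. exact: big_cat. Qed.

Lemma bilin_sum_nil (P : lSemiModType A) (b : U -> V -> P) : bilin_sum b [::] = 0.
Proof. exact: big_nil. Qed.

Lemma bilin_sum1 (P : lSemiModType A) (b : U -> V -> P) x y : bilin_sum b [:: (x, y)] = b x y.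
Proof. exact: big_seq1. Qed.

Definition scale_pairs (a : A) (s : seq (U * V)) := [seq (a *: x.1, x.2) | x <- s].

Lemma bilin_sum_scale (P : lSemiModType A) (b : U -> V -> P) a s :
  Defs.bilinear b -> bilin_sum b (scale_pairs a s) = a *: bilin_sum b s.
Proof.
case=> hb _; rewrite /bilin_sum big_map scaler_sumr.
by apply: eq_bigr => x _; case: (hb x.2) => _ _ ->.
Qed.

Definition tensor_zero : tensor := tensor_class [::].
Definition tensor_add (z1 z2 : tensor) : tensor := tensor_class (val z1 ++ val z2).
Definition tensor_scale (a : A) (z : tensor) : tensor := tensor_class (scale_pairs a (val z)).

Ltac bilin_simpl hb :=
  rewrite ?(bilin_sum_cat, bilin_sum_class _ hb, bilin_sum_scale _ _ hb, bilin_sum_nil, bilin_sum1).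

Lemma tensor_addA : associative tensor_add.
Proof. by move=> x y z; apply: tensor_class_eq => P b hb; bilin_simpl hb; rewrite addrA. Qed.

Lemma tensor_addC : commutative tensor_add.
Proof. by move=> x y; apply: tensor_class_eq => P b hb; bilin_simpl hb; rewrite addrC. Qed.

Lemma tensor_add0 : left_id tensor_zero tensor_add.
Proof.
move=> x; rewrite -[RHS]tensor_classK.
by apply: tensor_class_eq => P b hb; bilin_simpl hb; rewrite add0r.
Qed.

HB.instance Definition _ := GRing.isNmodule.Build tensor tensor_addA tensor_addC tensor_add0.

Lemma tensor_scaleA a b z : tensor_scale a (tensor_scale b z) = tensor_scale (a * b) z.
Proof. by apply: tensor_class_eq => P c hc; bilin_simpl hc; rewrite scalerA. Qed.

Lemma tensor_scale0 z : tensor_scale 0 z = 0.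
Proof. by apply: tensor_class_eq => P c hc; bilin_simpl hc; rewrite scale0r. Qed.

Lemma tensor_scale1 : left_id 1 tensor_scale.
Proof.
move=> z; rewrite -[RHS]tensor_classK.
by apply: tensor_class_eq => P c hc; bilin_simpl hc; rewrite scale1r.
Qed.

Lemma tensor_scaleDr : right_distributive tensor_scale +%R.
Proof. by move=> a x y; apply: tensor_class_eq => P c hc; bilin_simpl hc; rewrite scalerDr. Qed.

Lemma tensor_scaleDl z : {morph tensor_scale^~ z : a b / a + b}.
Proof. by move=> a b; apply: tensor_class_eq => P c hc; bilin_simpl hc; rewrite scalerDl. Qed.

HB.instance Definition _ := GRing.Nmodule_isLSemiModule.Build A tensor
  tensor_scaleA tensor_scale0 tensor_scale1 tensor_scaleDr tensor_scaleDl.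

Definition tens (x : U) (y : V) : tensor := tensor_class [:: (x, y)].

Lemma tensor_class_sum s : tensor_class s = \sum_(x <- s) tens x.1 x.2.
Proof.
elim: s => [|x s IHs]; first by rewrite big_nil.
rewrite big_cons -IHs; apply: tensor_class_eq => P c hc.
by bilin_simpl hc; rewrite /bilin_sum big_cons.
Qed.

Lemma tens_is_tensor : is_tensor tens.
Proof.
split.
  split=> [y|x]; split=> [|x1 x2|a x1];
    apply: tensor_class_eq => P c hc; bilin_simpl hc; have [hc1 hc2] := hc;
    by [case: (hc1 y) | case: (hc2 x)].
move=> P b hb; split.
  exists (fun z => bilin_sum b (val z)); split; last by move=> x y; bilin_simpl hb.
  by split=> [|x y|a x]; rewrite /= bilin_sum_class // ?bilin_sum_nil ?bilin_sum_cat ?bilin_sum_scale.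
move=> h h' hh hh' e e' z.
rewrite -(tensor_classK z) tensor_class_sum !(modhom_sum _ _ hh, modhom_sum _ _ hh').
by apply: eq_bigr => x _; rewrite e e'.
Qed.

Lemma tens_sum_bilinear (I J : Type) (r : seq I) (r' : seq J)
    (x : I -> U) (y : I -> V) (x' : J -> U) (y' : J -> V) (P : lSemiModType A) (b : U -> V -> P) :
  Defs.bilinear b ->
  \sum_(i <- r) tens (x i) (y i) = \sum_(j <- r') tens (x' j) (y' j) ->
  \sum_(i <- r) b (x i) (y i) = \sum_(j <- r') b (x' j) (y' j).
Proof.
move=> hb; have sum_class (K : Type) (t : seq K) xK yK :
    \sum_(k <- t) tens (xK k) (yK k) = tensor_class [seq (xK k, yK k) | k <- t].
  by rewrite tensor_class_sum big_map.
rewrite !sum_class => /tensor_class_inj/(_ P b hb).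
by rewrite /bilin_sum !big_map.
Qed.

End TensorProduct.

Lemma tensor_map_exists (A : comPzSemiRingType) (U U' M T T' : lSemiModType A)
    (t : U -> M -> T) (t' : U' -> M -> T') (f : U -> U') :
  is_tensor t -> is_tensor t' -> modhom f -> exists h, tensor_map t t' f h.
Proof.
case=> _ univ [[bil_t' ht'] _] [f0 fD fZ].
have hb : Defs.bilinear (fun x y => t' (f x) y).
  split=> [y|x]; last exact: ht'.
  by case: (bil_t' y) => h0 hD hZ; split=> [|x x'|a x]; rewrite ?f0 ?fD ?fZ.
by case: (univ _ _ hb) => [[h [hh he]] _]; exists h.
Qed.

Lemma flat_equalizer_tens (A : comPzSemiRingType) (M N N' E : lSemiModType A)
    (f g : N -> N') (e : E -> N) (f' g' : tensor N M -> tensor N' M) (z : tensor N M) :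
  flat M -> modhom f -> modhom g -> is_equalizer f g e ->
  tensor_map (@tens A N M) (@tens A N' M) f f' ->
  tensor_map (@tens A N M) (@tens A N' M) g g' ->
  f' z = g' z ->
  exists s : seq (E * M), z = \sum_(x <- s) tens (e x.1) x.2.
Proof.
move=> [_ [_ [_ [_ [flat_eq _]]]]] hf hg eq_e hf' hg' fgz.
have [hom_e _ _] := eq_e.
have [e' he'] := tensor_map_exists (tens_is_tensor E M) (tens_is_tensor N M) hom_e.
have [_ _ univ] := flat_eq _ _ _ _ _ _ _ _ _ _ _ _ _ _ _ hf hg eq_e
  (tens_is_tensor N M) (tens_is_tensor N' M) (tens_is_tensor E M) hf' hg' he'.
pose k (a : A^o) := (a : A) *: z.
have hk : modhom k by split=> [|a b|a b]; rewrite /k ?scale0r ?scalerDl ?scalerA.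
have fgk a : f' (k a) = g' (k a).
  by case: hf' => [[_ _ ->] _]; case: hg' => [[_ _ ->] _]; rewrite fgz.
have [[h [_ he]] _] := univ _ k hk fgk.
exists (val (h 1)); case: he' => hom_e' e'_tens.
by rewrite -[z]scale1r -/(k 1) -he -{1}(tensor_classK (h 1)) tensor_class_sum
  (modhom_sum _ _ hom_e'); apply: eq_bigr => x _; rewrite e'_tens.
Qed.

Section DualOfFreeModule.
Variables (A : comPzSemiRingType) (n : nat).

Definition dot (y x : 'rV[A]_n) : A := \sum_(i < n) y 0 i * x 0 i.

Lemma dot0l x : dot 0 x = 0.
Proof. by rewrite /dot big1 // => i _; rewrite mxE mul0r. Qed.

Lemma dot0r y : dot y 0 = 0.
Proof. by rewrite /dot big1 // => i _; rewrite mxE mulr0. Qed.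

Lemma dotDl y y' x : dot (y + y') x = dot y x + dot y' x.
Proof. by rewrite /dot -big_split; apply: eq_bigr => i _; rewrite mxE mulrDl. Qed.

Lemma dotDr y x x' : dot y (x + x') = dot y x + dot y x'.
Proof. by rewrite /dot -big_split; apply: eq_bigr => i _; rewrite mxE mulrDr. Qed.

Lemma dotZl a y x : dot (a *: y) x = a * dot y x.
Proof. by rewrite /dot mulr_sumr; apply: eq_bigr => i _; rewrite mxE mulrA. Qed.

Lemma dotZr a y x : dot y (a *: x) = a * dot y x.
Proof. by rewrite /dot mulr_sumr; apply: eq_bigr => i _; rewrite mxE mulrCA. Qed.

Lemma dot_deltal i x : dot (delta_mx 0 i) x = x 0 i.
Proof.
rewrite /dot (bigD1 i) //= big1 ?addr0; first by rewrite mxE !eqxx mul1r.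
by move=> j ji; rewrite mxE (negbTE ji) mul0r.
Qed.

Definition dot_with (r : 'rV[A]_n) (y : 'rV[A]_n) : A^o := dot y r.

Lemma dot_with_hom r : modhom (dot_with r).
Proof. by split=> [|x y|a x]; rewrite /dot_with ?dot0l ?dotDl ?dotZl. Qed.

Variables p q : 'rV[A]_n.

Definition dot_eq : {pred 'rV[A]_n} := fun y => dot y p == dot y q.

Lemma dot_eq_closed : subsemimod_closed dot_eq.
Proof.
split; first split.
- by rewrite unfold_in /dot_eq !dot0l.
- by move=> x y; rewrite !unfold_in /dot_eq !dotDl => /eqP-> /eqP->.
- by move=> a x; rewrite !unfold_in /dot_eq !dotZl => /eqP->.
Qed.

HB.instance Definition _ := GRing.isSubSemiModClosed.Build A _ dot_eq dot_eq_closed.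

Definition dot_equalizer := {y : 'rV[A]_n | y \in dot_eq}.
HB.instance Definition _ := [isSub for (@proj1_sig _ _ : dot_equalizer -> _)].
HB.instance Definition _ := [Choice of dot_equalizer by <:].
HB.instance Definition _ := [SubChoice_isSubLSemiModule of dot_equalizer by <:].

Lemma dot_equalizerP : is_equalizer (dot_with p) (dot_with q) (val : dot_equalizer -> _).
Proof.
split=> [||X k hk fgk]; first by [].
  by move=> y; apply/eqP; exact: (valP y).
split.
  have kP x : k x \in dot_eq by apply/eqP; exact: fgk.
  exists (fun x => Sub (k x) (kP x)); split=> //.
  by case: hk => k0 kD kZ; split=> [|x y|a x]; apply: val_inj; rewrite /= ?k0 ?kD ?kZ.
by move=> h h' _ _ e e' x; apply: val_inj; rewrite e e'.
Qed.

End DualOfFreeModule.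

Section DualTensor.
Variables (A : comPzSemiRingType) (M : lSemiModType A) (n : nat).
Variables (v : 'rV[A]_n -> M) (hv : modhom v).

(* v, seen in Hom(A^n, M) = (A^n)^* (x) M with (A^n)^* identified with A^n. *)
Definition dual_tensor : tensor 'rV[A]_n M :=
  \sum_(i < n) tens (delta_mx 0 i) (v (delta_mx 0 i)).

Lemma hom_expand x : v x = \sum_(i < n) x 0 i *: v (delta_mx 0 i).
Proof.
rewrite {1}(row_sum_delta x) (modhom_sum _ _ hv).
by apply: eq_bigr => i _; case: hv => _ _ ->.
Qed.

Lemma dual_tensor_dot_with r (h : tensor 'rV[A]_n M -> tensor A^o M) :
  tensor_map (@tens A _ M) (@tens A _ M) (dot_with r) h -> h dual_tensor = tens (1 : A^o) (v r).
Proof.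
case: (tens_is_tensor A^o M) => [[bil_l bil_r] _] [hh h_tens].
have tens_scale (a : A^o) (m : M) : tens a m = tens (1 : A^o) ((a : A) *: m).
  case: (bil_r 1) => _ _ ->; case: (bil_l m) => _ _ <-.
  by congr tens; rewrite /GRing.scale /= mulr1.
rewrite (modhom_sum _ _ hh) (hom_expand r) (modhom_sum _ _ (bil_r 1)).
by apply: eq_bigr => i _; rewrite h_tens /dot_with dot_deltal tens_scale.
Qed.

Lemma dual_tensor_eval (s : seq ('rV[A]_n * M)) :
  dual_tensor = \sum_(y <- s) tens y.1 y.2 -> forall x, v x = \sum_(y <- s) dot y.1 x *: y.2.
Proof.
move=> zs x.
have hb : Defs.bilinear (fun (y : 'rV[A]_n) (m : M) => dot y x *: m).
  split=> [m|y]; split=> [|a b|a b];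
    rewrite ?dot0l ?dotDl ?dotZl ?scale0r ?scaler0 ?scalerDl ?scalerDr ?scalerA ?(mulrC a) //.
rewrite hom_expand -(tens_sum_bilinear hb zs).
by apply: eq_bigr => i _; rewrite dot_deltal.
Qed.

End DualTensor.

Section FiniteFactorization.
Variables (A : comPzSemiRingType) (M : lSemiModType A) (n : nat).
Variable s : seq ('rV[A]_n * M).

Definition pairing_row (x : 'rV[A]_n) : 'rV[A]_(size s) :=
  \row_(j < size s) dot (nth (0, 0) s j).1 x.

Definition combination (c : 'rV[A]_(size s)) : M :=
  \sum_(j < size s) c 0 j *: (nth (0, 0) s j).2.

Lemma pairing_row_hom : modhom pairing_row.
Proof. by split=> [|x y|a x]; apply/rowP => j; rewrite !mxE ?dot0r ?dotDr ?dotZr. Qed.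

Lemma combination_hom : modhom combination.
Proof.
split=> [|c c'|a c]; rewrite /combination.
- by rewrite big1 // => j _; rewrite mxE scale0r.
- by rewrite -big_split; apply: eq_bigr => j _; rewrite mxE scalerDl.
- by rewrite scaler_sumr; apply: eq_bigr => j _; rewrite mxE scalerA.
Qed.

Lemma combination_pairing_row x :
  combination (pairing_row x) = \sum_(y <- s) dot y.1 x *: y.2.
Proof.
rewrite (big_nth (0, 0)) big_mkord.
by apply: eq_bigr => j _; rewrite mxE.
Qed.

Lemma pairing_row_eq p q :
  all (fun y => dot y.1 p == dot y.1 q) s -> pairing_row p = pairing_row q.
Proof.
move=> /all_nthP eq_s; apply/rowP => j; rewrite !mxE.
by apply/eqP/eq_s.
Qed.

End FiniteFactorization.

Arguments pairing_row {A M n} s x.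
Arguments combination {A M n} s c.

Theorem mainTheorem5 (A : comPzSemiRingType) (M : lSemiModType A) (n : nat)
  (v : 'rV[A]_n -> M) (f g : A^o -> 'rV[A]_n) :
  flat M -> modhom v -> modhom f -> modhom g ->
  (forall a, v (f a) = v (g a)) ->
  exists (m : nat) (u : 'rV[A]_n -> 'rV[A]_m) (w : 'rV[A]_m -> M),
    [/\ modhom u, modhom w, (forall x, v x = w (u x)) & (forall a, u (f a) = u (g a))].
Proof.
move=> flatM hv hf hg vfg.
set p := f 1; set q := g 1.
have [F hF] := tensor_map_exists (tens_is_tensor _ M) (tens_is_tensor A^o M) (dot_with_hom p).
have [G hG] := tensor_map_exists (tens_is_tensor _ M) (tens_is_tensor A^o M) (dot_with_hom q).
have FG : F (dual_tensor v) = G (dual_tensor v).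
  by rewrite (dual_tensor_dot_with hv hF) (dual_tensor_dot_with hv hG) vfg.
have [s zE] := flat_equalizer_tens flatM (dot_with_hom p) (dot_with_hom q)
  (dot_equalizerP p q) hF hG FG.
pose t := [seq (val y.1, y.2) | y <- s].
exists (size t), (pairing_row t), (combination t); split.
- exact: pairing_row_hom.
- exact: combination_hom.
- move=> x; rewrite combination_pairing_row; apply: (dual_tensor_eval hv).
  by rewrite zE big_map.
- move=> a; rewrite (modhom_regular a hf) (modhom_regular a hg).
  have [_ _ ->] := pairing_row_hom t; have [_ _ ->] := pairing_row_hom t.
  congr (_ *: _); apply: pairing_row_eq.
  by apply/allP => _ /mapP[y _ ->]; exact: (valP y.1).
Qed.
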